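(* Let $W\subset S$ be a one-dimensional $\mathbb{F}_q$-subspace and $\lambda,\mu$ partitions. Then $$T_{\lambda/\mu}(W)=\begin{cases}(-1)^{|\lambda|-|\mu|}\prod_{s\in\lambda/\mu}\varphi^{c(s)}E_1(W)&\text{if }\mu\subseteq\lambda\text{ and }\lambda/\mu\text{ is a vertical strip},\\ 0&\text{otherwise,}\end{cases}$$ where for a box $s=(i,j)$ (row $i$, column $j$) the content is $c(s)=j-i$.
   Context: Let $q$ be a power of a prime $p$, $S=\mathbb{F}_q[x_1,\dots,x_n]$, $\widehat S=\bigcup_{r\ge0}\mathbb{F}_q[x_1^{q^{-r}},\dots,x_n^{q^{-r}}]$, $\varphi(u)=u^q$ the Frobenius automorphism of $\widehat S$. For a subspace $W\subset S$ of dimension $k$ with basis $w_1,\dots,w_k$ and strictly decreasing nonnegative integers $\alpha_1>\dots>\alpha_k$, $A_\alpha(W)=\det(w_i^{q^{\alpha_j}})_{i,j}$; for a partition $\lambda$ with at most $k$ nonzero parts, $S_\lambda(W)=A_{\lambda+\delta_k}(W)/A_{\delta_k}(W)$, $\delta_k=(k-1,\dots,0)$. $E_r(W)=S_{(1^r)}(W)$ for $0\le r\le k$, $E_r(W)=0$ otherwise (so for $\dim W=1$ with basis $w$, $E_1(W)=w^{q-1}$). For partitions $\lambda,\mu$ with $N=\max\{\ell(\lambda),\ell(\mu)\}$ ($\ell$ = number of nonzero parts), $T_{\lambda/\mu}(W)=\det\big((-1)^{\lambda_i-\mu_j-i+j}\varphi^{\lambda_i-i}E_{\lambda_i-\mu_j-i+j}(W)\big)_{1\le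 i,j\le N}$. $\mu\subseteq\lambda$ means $\mu_i\le\lambda_i$ for all $i$; the skew diagram $\lambda/\mu$ is the set of boxes $(i,j)$ with $\mu_i<j\le\lambda_i$; it is a vertical strip if no two of its boxes lie in the same row, i.e. $0\le\lambda_i-\mu_i\le1$ for all $i$. *)

From HB Require Import structures.
From mathcomp Require Import all_boot all_order all_algebra.
From mathcomp Require Import mpoly.
Set Implicit Arguments. Unset Strict Implicit. Unset Printing Implicit Defensive.
Import Order.TTheory GRing.Theory Num.Theory.
Local Open Scope ring_scope.

Definition phiz (R : Type) (phi psi : R -> R) (k : int) (x : R) : R :=
  match k with
  | Posz m => iter m phi x
  | Negz m => iter m.+1 psi x
  end.

(* Hypotheses characterizing (R, incl, phi, psi) as the perfect closure
   \hat S = \bigcup_r F_q[x^{q^{-r}}] of S, with phi = Frobenius u |-> u^q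
   and psi its inverse, and incl the inclusion S \subset \hat S. *)
Definition is_perfection (q : nat) (S R : comNzRingType)
  (incl : {rmorphism S -> R}) (phi : {rmorphism R -> R}) (psi : R -> R) : Prop :=
  [/\ injective incl,
      forall u : R, phi u = u ^+ q,
      cancel phi psi, cancel psi phi
    & forall u : R, exists r : nat, exists f : S, u = iter r psi (incl f)].

(* E_r(W) for the one-dimensional space W = F_q w: with k = 1, delta_1 = (0),
   A_(a)(W) = w^(q^a), so E_0(W) = A_(0)/A_(0) = 1, E_1(W) = A_(1)/A_(0)
   = w^(q-1), and E_r(W) = 0 for every other integer r. *)
Definition E_dim1 (q : nat) (S : comNzRingType) (w : S) (r : int) : S :=
  if r == 0 then 1 else if r == 1 then w ^+ q.-1 else 0.

(* Partitions: nonincreasing sequences of positive integers; lambda_i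
   (1-based) is nth 0 la (i-1), which is 0 beyond the length. *)
Definition is_partition (la : seq nat) : bool :=
  sorted geq la && all (fun x => 0 < x)%N la.

Definition sgn_int (R : nzRingType) (z : int) : R := (-1) ^+ `|z|%N.

(* The matrix of T_{lambda/mu}(W), dim W = 1, indices 0-based (i = row-1). *)
Definition T_matrix (q : nat) (S R : comNzRingType) (incl : S -> R)
  (phi psi : R -> R) (w : S) (la mu : seq nat) :
  'M[R]_(maxn (size la) (size mu)) :=
  \matrix_(i, j)
    let r : int := (nth 0%N la i)%:Z - (nth 0%N mu j)%:Z - (i.+1)%:Z + (j.+1)%:Z in
    sgn_int R r *
    phiz phi psi ((nth 0%N la i)%:Z - (i.+1)%:Z) (incl (E_dim1 q w r)).

Definition T_skew (q : nat) (S R : comNzRingType) (incl : S -> R)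
  (phi psi : R -> R) (w : S) (la mu : seq nat) : R :=
  \det (T_matrix q incl phi psi w la mu).

(* mu \subseteq lambda : mu_i <= lambda_i for all i (checked up to the larger
   length; beyond it both parts are 0). *)
Definition subpart (mu la : seq nat) : bool :=
  [forall i : 'I_(maxn (size la) (size mu)), nth 0 mu i <= nth 0 la i]%N.

Definition vertical_strip (la mu : seq nat) : bool :=
  [forall i : 'I_(maxn (size la) (size mu)), nth 0 la i - nth 0 mu i <= 1]%N.

From HB Require Import structures.
From mathcomp Require Import all_boot all_order all_algebra.
From mathcomp Require Import mpoly.
From mathcomp Require Import fingroup perm zify.
Set Implicit Arguments.
Unset Strict Implicit.
Unset Printing Implicit Defensive.

Import Order.TTheory GRing.Theory Num.Theory.
Local Open Scope ring_scope.

(* For dim W = 1 the entry in row i and column j of the Jacobi-Trudi type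
   matrix of T_{la/mu}(W) vanishes unless r = la_i - mu_j - i + j is 0 or 1.
   If i < k and l < j, partitions being nonincreasing gives
   r(k,l) <= r(i,j) - 2, so no two nonzero entries are in crossing position
   and only the identity permutation contributes to the determinant.  The
   diagonal entry is 1 when la_i = mu_i, -phi^(la_i - i) E_1(W) when
   la_i = mu_i + 1, and 0 otherwise. *)

Lemma perm_homo_ltn_id N (s : 'S_N) : {homo s : i j / (i < j)%N} -> s = 1%g.
Proof.
move=> s_mono; apply/permP => i; rewrite perm1.
have ltn_ord_trans : transitive (fun i j : 'I_N => (i < j)%N).
  by move=> ? ? ?; apply: ltn_trans.
have enum_sorted : sorted (fun i j : 'I_N => (i < j)%N) (enum 'I_N).
  by have := iota_ltn_sorted 0 N; rewrite -val_enum_ord sorted_map.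
have : map s (enum 'I_N) = map id (enum 'I_N).
  apply: (irr_sorted_eq ltn_ord_trans) => [j|||j].
  - exact: ltnn.
  - exact: (homo_sorted s_mono).
  - by rewrite map_id.
  - by rewrite map_id mem_enum -[j](permKV s) map_f ?mem_enum.
by move/eq_in_map/(_ i); apply; rewrite mem_enum.
Qed.

Lemma perm_inversion N (s : 'S_N) :
  s != 1%g -> exists i k : 'I_N, (i < k)%N /\ (s k < s i)%N.
Proof.
move=> s_neq1.
have : ~~ [forall i : 'I_N, forall k : 'I_N, (i < k)%N ==> (s i < s k)%N].
  apply: contra s_neq1 => /forallP s_mono; apply/eqP/perm_homo_ltn_id.
  by move=> i k; apply/implyP/(forallP (s_mono i)).
case/forallPn => i /forallPn [k]; rewrite negb_imply -leqNgt => /andP [lt_ik].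
rewrite leq_eqVlt (inj_eq val_inj) (inj_eq perm_inj) => /orP [/eqP eq_ki|].
  by move: lt_ik; rewrite eq_ki ltnn.
by exists i, k.
Qed.

Lemma det_noncrossing (R : comNzRingType) N (A : 'M[R]_N) :
    (forall i k j l : 'I_N, (i < k)%N -> (l < j)%N -> A i j = 0 \/ A k l = 0) ->
  \det A = \prod_i A i i.
Proof.
move=> noncrossing; rewrite /determinant (bigD1 1%g) //= odd_perm1 mul1r.
rewrite [X in _ + X]big1 ?addr0 => [|s s_neq1]; first by apply: eq_bigr => i _; rewrite perm1.
have [i [k [lt_ik lt_sk]]] := perm_inversion s_neq1.
have [z Az0] : exists z, A z (s z) = 0.
  by case: (noncrossing i k (s i) (s k) lt_ik lt_sk) => ?; [exists i | exists k].
by rewrite (bigD1 z) //= Az0 mul0r mulr0.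
Qed.

Lemma sorted_geq_nth (s : seq nat) :
  sorted geq s -> {homo nth 0%N s : i j / (i <= j)%N >-> (j <= i)%N}.
Proof.
move=> s_sorted i j le_ij; have [lt_js|le_sj] := ltnP j (size s).
  apply: (sorted_leq_nth (rev_trans leq_trans) leqnn 0%N s_sorted) => //.
  exact: leq_ltn_trans le_ij lt_js.
by rewrite nth_default.
Qed.

Lemma sumn_nth_ord (s : seq nat) N :
  (size s <= N)%N -> sumn s = (\sum_(i < N) nth 0%N s i)%N.
Proof.
move=> le_sN; rewrite sumnE (big_nth 0%N) big_mkord (big_ord_widen _ _ le_sN).
by rewrite big_mkcond; apply: eq_bigr => i _; case: ltnP => // ?; rewrite nth_default.
Qed.

Lemma big_ord_narrow_idx (R : Type) (idx : R) (op : Monoid.law idx) m n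
    (F : nat -> R) :
  (m <= n)%N -> (forall i, (m <= i)%N -> F i = idx) ->
  \big[op/idx]_(i < n) F i = \big[op/idx]_(i < m) F i.
Proof.
move=> le_mn F_idx; rewrite (big_ord_widen _ F le_mn) [RHS]big_mkcond.
by apply: eq_bigr => i _; case: ltnP => // /F_idx.
Qed.

Section PhiPowers.

Variables (R : nzRingType) (phi : {rmorphism R -> R}) (psi : R -> R).
Hypothesis phiK : cancel phi psi.

Lemma phiz0 k : phiz phi psi k 0 = 0.
Proof.
have psi0 : psi 0 = 0 by rewrite -{1}(rmorph0 phi) phiK.
by case: k => m /=; elim: m => //= m ->; rewrite ?rmorph0 ?psi0.
Qed.

Lemma phiz1 k : phiz phi psi k 1 = 1.
Proof.
have psi1 : psi 1 = 1 by rewrite -{1}(rmorph1 phi) phiK.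
by case: k => m /=; elim: m => //= m ->; rewrite ?rmorph1 ?psi1.
Qed.

End PhiPowers.

Definition T_band (la mu : seq nat) (i j : nat) : int :=
  (nth 0%N la i)%:Z - (nth 0%N mu j)%:Z - (i.+1)%:Z + (j.+1)%:Z.

Lemma T_band_diag la mu i :
  T_band la mu i i = (nth 0%N la i)%:Z - (nth 0%N mu i)%:Z.
Proof. by rewrite /T_band subrK. Qed.

Section TMatrix.

Variables (q : nat) (S R : comNzRingType) (incl : {rmorphism S -> R}).
Variables (phi : {rmorphism R -> R}) (psi : R -> R) (w : S).
Hypothesis phiK : cancel phi psi.
Variables la mu : seq nat.

Local Notation N := (maxn (size la) (size mu)).
Local Notation M := (T_matrix q incl phi psi w la mu).
Local Notation E1 i := (phiz phi psi ((nth 0%N la i)%:Z - (i.+1)%:Z)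
                          (incl (E_dim1 q w 1))).

Lemma T_matrixE (i j : 'I_N) :
  M i j = if T_band la mu i j == 0 then 1
          else if T_band la mu i j == 1 then - E1 i else 0.
Proof.
rewrite mxE /= -/(T_band la mu i j) /E_dim1 /sgn_int.
case: eqP => [->|_]; first by rewrite rmorph1 phiz1 // mulr1.
case: eqP => [->|_]; first by rewrite expr1 mulN1r.
by rewrite rmorph0 phiz0 // mulr0.
Qed.

Lemma T_matrix_out_of_band (i j : 'I_N) :
  T_band la mu i j != 0 -> T_band la mu i j != 1 -> M i j = 0.
Proof. by rewrite T_matrixE => /negbTE -> /negbTE ->. Qed.

Lemma T_matrix_noncrossing : sorted geq la -> sorted geq mu ->
  forall i k j l : 'I_N,
  (i < k)%N -> (l < j)%N -> M i j = 0 \/ M k l = 0.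
Proof.
move=> la_sorted mu_sorted i k j l lt_ik lt_lj.
have le_la := sorted_geq_nth la_sorted (ltnW lt_ik).
have le_mu := sorted_geq_nth mu_sorted (ltnW lt_lj).
have [band_ij|] := boolP ((T_band la mu i j == 0) || (T_band la mu i j == 1)).
  right; apply: T_matrix_out_of_band; move: band_ij; rewrite /T_band; lia.
by rewrite negb_or => /andP [? ?]; left; apply: T_matrix_out_of_band.
Qed.

Lemma T_matrix_diag (i : 'I_N) :
  (nth 0%N mu i <= nth 0%N la i <= (nth 0%N mu i).+1)%N ->
  M i i = (-1) ^+ (nth 0%N la i - nth 0%N mu i) *
          \prod_((nth 0%N mu i).+1 <= j < (nth 0%N la i).+1)
            phiz phi psi (j%:Z - (i.+1)%:Z) (incl (E_dim1 q w 1)).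
Proof.
case/andP => le_mu_la le_la; rewrite T_matrixE T_band_diag.
have [->|neq_la_mu] := eqVneq (nth 0%N la i) (nth 0%N mu i).
  by rewrite subrr eqxx subnn big_geq // expr0 mulr1.
have -> : nth 0%N la i = (nth 0%N mu i).+1 by lia.
have -> : (nth 0%N mu i).+1%:Z - (nth 0%N mu i)%:Z = 1 by lia.
by rewrite subSnn expr1 big_nat1 mulN1r.
Qed.

Lemma T_matrix_diag_eq0 (i : 'I_N) :
  ~~ (nth 0%N mu i <= nth 0%N la i <= (nth 0%N mu i).+1)%N -> M i i = 0.
Proof.
move=> not_strip; apply: T_matrix_out_of_band;
  by move: not_strip; rewrite T_band_diag; lia.
Qed.

End TMatrix.

Theorem mainTheorem4 (F : finFieldType) (n : nat)
  (R : comNzRingType) (incl : {rmorphism {mpoly F[n]} -> R})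
  (phi : {rmorphism R -> R}) (psi : R -> R)
  (Hperf : is_perfection #|F| incl phi psi)
  (w : {mpoly F[n]}) (Hw : w != 0)
  (la mu : seq nat) (Hla : is_partition la) (Hmu : is_partition mu) :
  T_skew #|F| incl phi psi w la mu =
  (if subpart mu la && vertical_strip la mu then
     (-1) ^+ (sumn la - sumn mu) *
     \prod_(i < size la)
       \prod_((nth 0 mu i).+1 <= j < (nth 0 la i).+1)
         phiz phi psi (j%:Z - (i.+1)%:Z) (incl (E_dim1 #|F| w 1))
   else 0).
Proof.
case: Hperf => _ _ phiK _ _.
case/andP: Hla => la_sorted _; case/andP: Hmu => mu_sorted _.
rewrite /T_skew det_noncrossing; last exact: T_matrix_noncrossing.
rewrite /subpart /vertical_strip; case: ifPn => [/andP [/forallP mu_le_la /forallP la_le_mu1]|].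
  have strip_i (i : 'I_(maxn (size la) (size mu))) :
    (nth 0%N mu i <= nth 0%N la i <= (nth 0%N mu i).+1)%N.
    by move: (mu_le_la i) (la_le_mu1 i); lia.
  rewrite (eq_bigr _ (fun i _ => T_matrix_diag _ _ _ phiK (strip_i i))).
  rewrite big_split prodrXr; congr (_ ^+ _ * _).
    rewrite (sumn_nth_ord (leq_maxl (size la) (size mu))).
    by rewrite (sumn_nth_ord (leq_maxr (size la) (size mu))) sumnB.
  pose row i := \prod_((nth 0%N mu i).+1 <= j < (nth 0%N la i).+1)
                  phiz phi psi (j%:Z - (i.+1)%:Z) (incl (E_dim1 #|F| w 1)).
  rewrite (big_ord_narrow_idx _ (F := row) (leq_maxl (size la) (size mu))) // => i.
  by move/(nth_default 0%N) => la_i0; rewrite /row la_i0 big_geq.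
rewrite negb_and => /orP [] /forallPn [i not_strip];
  rewrite (bigD1 i) //= T_matrix_diag_eq0 ?mul0r //; lia.
Qed.
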